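(* Let $\gamma_1,\dots,\gamma_n$ be programs with common recorder $h$ and let $h_0$ be a fresh trace variable. For each $j$ let $v_j$ be a state and $Y_j\supseteq CN(\gamma_j)$ a channel set with $v_j\models h_0\downarrow Y_j=h\downarrow Y_j$; let $(v_j,\tau_j,w_j)\in[\![\gamma_j]\!]$ and let $\tau_{ej}$ be a recorded trace with $\tau_j=\tau_{ej}\downarrow Y_j$. Let $\tilde v$ be a state such that at least one of the following holds: (1) for all $j$, $\tilde v=v_j\cdot\tau_{ej}$; or (2) for all $j$, $\tilde v=w_{ej}\cdot\tau_{ej}$ for some state $w_{ej}$ with $w_{ej}=w_j$ on $\{h_0,h\}$ (in particular $w_j\ne\bot$). Then for every channel set $Y\supseteq\bigcup_jCN(\gamma_j)$: if $\tilde v\models h\downarrow Y\succeq h_0$, there is a suffix $\tau_h$ of $\tilde v(h)$ (i.e. $\tilde v(h)=\rho\cdot\tau_h$ for some trace $\rho$) such that $\tau_h\downarrow\gamma_j=\tau_j(h)$ for all $j$ and $\tilde v(h)\downarrow Y=\tilde v(h_0)\cdot(\tau_h\downarrow Y)$.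
   Context: Communicating hybrid programs (CHPs) over real variables, trace variables and channels $\mathbb N$; each program binds at most one trace variable, its recorder. Traces are finite sequences of events $\langle ch,a,d\rangle\in\mathbb N\times\mathbb R\times\mathbb R$; $\tau\downarrow Y$ deletes events with channel outside $Y$; $\tau\downarrow\gamma$ projects onto the channels of program $\gamma$; $\preceq$ is the prefix order ($\succeq$ its converse). A recorded trace is a pair $(h,\tau)$, viewed also as the map sending $h$ to $\tau$ and all other trace variables to $\epsilon$; projection acts pointwise, so $\tau_{ej}\downarrow Y_j$ and $\tau_j(h)$ make sense. States map real variables to reals and trace variables to traces; $v\cdot(h,\tau)$ is $v$ with $v(h)$ replaced by $v(h)\cdot\tau$. The semantics $[\![\gamma]\!]$ of a program is a set of runs $(v,\tau,w)$: initial state $v$, communication $\tau$ recorded by the program's recorder, final state $w$ or $\bot$ (unfinished). $CN(\gamma)$ is the set of channels $ch$ such that $\tau\downarrow\{ch\}\ne\epsilon$ for some run $(v,\tau,w)\in[\![\gamma]\!]$. Bound-effect property: for every run $(v,\tau,w)$ with $w\ne\bot$, $v=w$ on trace variables and on all variables not bound by $\gamma$ (in particular $w(h_0)=v(h_0)$ and $w(h)=v(h)$ for the recorder $h$). *)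

From Stdlib Require Import Reals List Arith PeanoNat ClassicalDescription.
Import ListNotations.
Open Scope R_scope.

(* channels are nat; events <ch, a, d> *)
Definition event : Type := (nat * R * R)%type.
Definition ev_ch (e : event) : nat := fst (fst e).
Definition trace : Type := list event.

Definition chset : Type := nat -> Prop.

Definition proj (Y : chset) (t : trace) : trace :=
  filter (fun e => if excluded_middle_informative (Y (ev_ch e)) then true else false) t.

Record state : Type := mkState { rv : nat -> R ; tv : nat -> trace }.

Definition rtrace : Type := (nat * trace)%type.

Definition rmap (r : rtrace) : nat -> trace :=
  fun x => if Nat.eqb x (fst r) then snd r else [].

Definition rproj (Y : chset) (r : rtrace) : nat -> trace :=
  fun x => proj Y (rmap r x).

Definition upd (v : state) (r : rtrace) : state :=
  mkState (rv v) (fun x => if Nat.eqb x (fst r) then tv v x ++ snd r else tv v x).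

Definition prefix (s t : trace) : Prop := exists u, t = s ++ u.

(* A program is given by its semantics [[gamma]]: a set of runs (v, tau, w),
   tau the communication recorded by the program's recorder, w = None for bot. *)
Definition prog : Type := state -> trace -> option state -> Prop.

Definition CN (g : prog) : chset :=
  fun ch => exists v t w, g v t w /\ proj (fun c => c = ch) t <> [].

Definition bound_effect_tv (g : prog) : Prop :=
  forall v t w, g v t (Some w) -> forall x, tv w x = tv v x.

(** Write [vt(h)↓Y = vt(h0) · u] and take a suffix [τ_h] of [vt(h)] with
    [τ_h↓Y = u].  Fix [j] and project onto [CN(γ_j)], which lies in both [Y]
    and [Y_j].  The state [vt] is [s · τ_ej] for a state [s] agreeing with
    [v_j] on [h] and [h0] (in case (2) by the bound-effect property), so [s(h)]
    and [s(h0)] have the same [CN(γ_j)]-projection, and on these channels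
    appending [τ_ej] adds exactly [τ_j] to [h] and nothing to the fresh [h0].
    Cancelling the common prefix in
    [vt(h)↓CN(γ_j) = vt(h0)↓CN(γ_j) · τ_h↓CN(γ_j)] leaves [τ_h↓CN(γ_j) = τ_j]. *)

From Stdlib Require Import Reals List Arith ClassicalDescription.
Import ListNotations.

Lemma proj_app (Y : chset) (s t : trace) : proj Y (s ++ t) = proj Y s ++ proj Y t.
Proof. apply filter_app. Qed.

Lemma proj_proj (C Y : chset) (t : trace) :
  (forall c, C c -> Y c) -> proj C (proj Y t) = proj C t.
Proof.
  intros CY. induction t as [|e t IH]; [reflexivity|]. unfold proj in *; simpl.
  destruct (excluded_middle_informative (Y (ev_ch e))) as [y|y]; simpl;
    destruct (excluded_middle_informative (C (ev_ch e))) as [c|c];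
    try rewrite IH; auto.
  contradiction (y (CY _ c)).
Qed.

Lemma proj_id (C : chset) (t : trace) :
  (forall e, In e t -> C (ev_ch e)) -> proj C t = t.
Proof.
  intros Ht. unfold proj. rewrite <- (filter_true t) at 2. apply filter_ext_in.
  intros e He. destruct (excluded_middle_informative (C (ev_ch e))) as [_|c];
    [reflexivity | contradiction (c (Ht e He))].
Qed.

Lemma proj_suffix (Y : chset) (t p u : trace) :
  proj Y t = p ++ u -> exists r s, t = r ++ s /\ proj Y s = u.
Proof.
  revert p. induction t as [|e t IH]; intros p Ht.
  - exists [], []. destruct p, u; try discriminate. auto.
  - unfold proj in Ht; simpl in Ht.
    destruct (excluded_middle_informative (Y (ev_ch e))) as [y|y].
    + destruct p as [|e' p].
      * exists [], (e :: t). split; [reflexivity|].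
        simpl in Ht. rewrite <- Ht. unfold proj; simpl.
        destruct (excluded_middle_informative (Y (ev_ch e))); [reflexivity | contradiction].
      * injection Ht as _ Ht. destruct (IH p Ht) as [r [s [-> Hs]]].
        exists (e :: r), s. auto.
    + destruct (IH p Ht) as [r [s [-> Hs]]]. exists (e :: r), s. auto.
Qed.

Lemma run_trace_proj_CN (g : prog) v t w : g v t w -> proj (CN g) t = t.
Proof.
  intros Hg. apply proj_id. intros e He. exists v, t, w. split; [exact Hg|].
  intros Hnil. assert (Hin : In e (proj (fun c => c = ev_ch e) t)).
  { apply filter_In. split; [exact He|].
    destruct (excluded_middle_informative (ev_ch e = ev_ch e));
      [reflexivity | contradiction]. }
  rewrite Hnil in Hin. destruct Hin.
Qed.

Lemma tv_upd (s : state) (r : rtrace) (x : nat) : tv (upd s r) x = tv s x ++ rmap r x.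
Proof.
  unfold upd, rmap; simpl.
  destruct (Nat.eqb x (fst r)); [reflexivity | symmetry; apply app_nil_r].
Qed.

Lemma proj_upd_recorder (C Y : chset) (s : state) (r : rtrace) (tau : trace) (h h0 : nat) :
  h0 <> h -> (forall c, C c -> Y c) ->
  rmap (h, tau) = rproj Y r -> proj C tau = tau ->
  proj C (tv s h0) = proj C (tv s h) ->
  proj C (tv (upd s r) h) = proj C (tv (upd s r) h0) ++ tau.
Proof.
  intros Hfresh CY Hrec Htau Hs.
  assert (Hr : forall x, proj C (rmap r x) = proj C (rmap (h, tau) x)).
  { intros x. rewrite Hrec. unfold rproj. symmetry. apply proj_proj, CY. }
  rewrite !tv_upd, !proj_app, !Hr, Hs. unfold rmap; simpl.
  rewrite Nat.eqb_refl, (proj2 (Nat.eqb_neq h0 h) Hfresh), Htau.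
  change (proj C []) with (@nil event). rewrite app_nil_r. reflexivity.
Qed.

Theorem lemmaC1 (n : nat) (gamma : nat -> prog) (h h0 : nat)
  (Hfresh : h0 <> h)
  (Hbe : forall j, (j < n)%nat -> bound_effect_tv (gamma j))
  (v : nat -> state) (Yj : nat -> chset) (tau : nat -> trace)
  (w : nat -> option state) (tauE : nat -> rtrace) (vt : state)
  (HY : forall j, (j < n)%nat -> forall ch, CN (gamma j) ch -> Yj j ch)
  (Hv : forall j, (j < n)%nat -> proj (Yj j) (tv (v j) h0) = proj (Yj j) (tv (v j) h))
  (Hrun : forall j, (j < n)%nat -> gamma j (v j) (tau j) (w j))
  (Htau : forall j, (j < n)%nat -> rmap (h, tau j) = rproj (Yj j) (tauE j))
  (Hcase : (forall j, (j < n)%nat -> vt = upd (v j) (tauE j)) \/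
           (forall j, (j < n)%nat -> exists (wej wj : state),
               w j = Some wj /\ tv wej h0 = tv wj h0 /\ tv wej h = tv wj h /\
               vt = upd wej (tauE j))) :
  forall Y : chset,
    (forall j, (j < n)%nat -> forall ch, CN (gamma j) ch -> Y ch) ->
    prefix (tv vt h0) (proj Y (tv vt h)) ->
    exists rho tauh : trace,
      tv vt h = rho ++ tauh /\
      (forall j, (j < n)%nat -> proj (CN (gamma j)) tauh = tau j) /\
      proj Y (tv vt h) = tv vt h0 ++ proj Y tauh.
Proof.
  intros Y HYc [u Hu].
  destruct (proj_suffix _ _ _ _ Hu) as [rho [tauh [Hsplit Htauh]]]; subst u.
  exists rho, tauh. split; [exact Hsplit|]. split; [|exact Hu].
  intros j Hj.
  pose proof (HY j Hj) as CYj. pose proof (HYc j Hj) as CY.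
  assert (Hstart : exists s, tv s h = tv (v j) h /\ tv s h0 = tv (v j) h0 /\
                             vt = upd s (tauE j)).
  { destruct Hcase as [Hc|Hc]; [exists (v j); auto|].
    destruct (Hc j Hj) as [wej [wj [Hw [E0 [E Hvt]]]]].
    pose proof (Hrun j Hj) as Hr. rewrite Hw in Hr.
    exists wej. rewrite E0, E, !(Hbe j Hj _ _ _ Hr). auto. }
  destruct Hstart as [s [Sh [Sh0 ->]]].
  assert (Hrec : proj (CN (gamma j)) (tv (upd s (tauE j)) h)
                 = proj (CN (gamma j)) (tv (upd s (tauE j)) h0) ++ tau j).
  { apply (proj_upd_recorder _ (Yj j)).
    - exact Hfresh.
    - exact CYj.
    - exact (Htau j Hj).
    - exact (run_trace_proj_CN _ _ _ _ (Hrun j Hj)).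
    - rewrite Sh, Sh0, <- (proj_proj _ (Yj j) (tv (v j) h0)), (Hv j Hj), proj_proj
        by exact CYj.
      reflexivity. }
  rewrite <- (proj_proj _ Y), Hu, proj_app, proj_proj in Hrec by exact CY.
  exact (app_inv_head _ _ _ Hrec).
Qed.
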